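(* Let $P$ be an Eulerian poset of rank $d\ge 3$ with $f$-vector $(f_{-1},\dots,f_d)$. Then $\mathcal{M}_P(z)=\sum_{-1\le i\le j\le d}N_{i,j}(-z)^{j-i}$, and all $N_{i,j}$ are determined by the $f$-vector together with the values $N_{i,j}$ for $0\le i$, $i+2\le j\le d-2$, as follows: $N_{r,r}=N_{-1,r}=N_{r,d}=f_r$ for $-1\le r\le d$; $N_{0,1}=2f_1$; for $1\le i\le d-3$, $$N_{i,i+1}=\bigl((-1)^i+1\bigr)f_{i+1}+\sum_{k=0}^{i-1}(-1)^{i+1-k}N_{k,i+1};$$ $N_{d-2,d-1}=2f_{d-2}$; and for $0\le i\le d-3$, $$N_{i,d-1}=\bigl((-1)^{d-i}+1\bigr)f_i+\sum_{j=i+1}^{d-2}(-1)^{d-j}N_{i,j}.$$ In particular, $\mathcal{M}_P(z)$ is determined by the $f$-vector and the numbers $N_{i,j}$ with $0<i+1<j<d-1$.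
   Context: A ranked poset is a finite poset with a rank function $|\cdot|$ such that covering relations increase rank by one and minimal elements have rank $-1$; $f_r$ is the number of elements of rank $r$. The Möbius function is $\mu[p,p]=1$, $\mu[p,q]=-\sum_{p\le s<q}\mu[p,s]$ for $p<q$, $0$ if $p\not\le q$. An Eulerian poset is a ranked poset with unique minimum and maximum elements such that $\mu[p,q]=(-1)^{|q|-|p|}$ for all $p\le q$. For $-1\le i\le j\le d$, $N_{i,j}$ is the number of pairs $(p,q)$ with $p\le q$, $|p|=i$, $|q|=j$. The Möbius polynomial is $\mathcal{M}_P(z)=\sum_{p\le q\in P}\mu[p,q]z^{|q|-|p|}$. *)

From HB Require Import structures.
From mathcomp Require Import all_boot all_order all_algebra.
Set Implicit Arguments. Unset Strict Implicit. Unset Printing Implicit Defensive.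
Import Order.TTheory GRing.Theory Num.Theory.
Local Open Scope ring_scope.

Section Poset.
Context {disp : Order.disp_t} {T : finPOrderType disp}.

Definition covers (x y : T) : bool :=
  (x < y)%O && [forall z : T, ~~ ((x < z)%O && (z < y)%O)].

Definition minimalb (x : T) : bool := [forall z : T, ~~ (z < x)%O].

Definition is_rank (rk : T -> int) : Prop :=
  (forall x y, covers x y -> rk y = rk x + 1) /\
  (forall x, minimalb x -> rk x = -1).

(* Moebius function, computed by the defining recursion with fuel;
   fuel #|T| exceeds the length of every chain, so it is exact. *)
Fixpoint mobius_fuel (n : nat) (p q : T) : int :=
  match n with
  | 0 => if p == q then 1 else 0
  | n'.+1 =>
      if p == q then 1
      else if (p <= q)%O then
        - \sum_(s : T | (p <= s)%O && (s < q)%O) mobius_fuel n' p s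
      else 0
  end.

Definition mobius (p q : T) : int := mobius_fuel #|T| p q.

Definition eulerian (rk : T -> int) (d : int) : Prop :=
  is_rank rk /\
  (exists bot : T, forall x : T, (bot <= x)%O) /\
  (exists top : T, (forall x : T, (x <= top)%O) /\ rk top = d) /\
  (forall p q : T, (p <= q)%O -> mobius p q = (-1) ^+ `|rk q - rk p|%N).

Definition fvec (rk : T -> int) (r : int) : nat := #|[set p : T | rk p == r]|.

Definition Nij (rk : T -> int) (i j : int) : nat :=
  #|[set pq : T * T | [&& (pq.1 <= pq.2)%O, rk pq.1 == i & rk pq.2 == j]]|.

Definition mobius_poly (rk : T -> int) : {poly int} :=
  \sum_(p : T) \sum_(q : T | (p <= q)%O)
     (mobius p q)%:P * 'X^(`|rk q - rk p|%N).

End Poset.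

(* Since mu(p, q) = (-1)^(|q| - |p|), the Moebius polynomial is the signed generating
   function of the N_{i,j}.  Euler's relation, summed over the intervals [0^, q] and
   [p, 1^], says that every column and every row of the matrix (N_{i,j}) has vanishing
   alternating sum.  These relations are triangular: the column relation for j = i + 1
   expresses N_{i,i+1} through N_{k,i+1} with k < i, and the row relation for i
   expresses N_{i,d-1} through N_{i,j} with i < j < d - 1, the boundary entries being
   f-numbers.  *)

From HB Require Import structures.
From mathcomp Require Import all_boot all_order all_algebra.
From mathcomp Require Import zify.
Set Implicit Arguments. Unset Strict Implicit. Unset Printing Implicit Defensive.
Import Order.TTheory GRing.Theory Num.Theory.
Local Open Scope ring_scope.

Section Intervals.
Context {disp : Order.disp_t} {T : finPOrderType disp}.
Implicit Types p q s z : T.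

Definition itv p q := [set s | (p <= s <= q)%O].

Lemma card_itv_ltl p z q : (p < z)%O -> (z <= q)%O -> (#|itv z q| < #|itv p q|)%N.
Proof.
move=> pz zq; apply: proper_card; apply/properP; split.
  by apply/subsetP=> s; rewrite !inE => /andP[zs ->]; rewrite (le_trans (ltW pz) zs).
by exists p; rewrite !inE ?lexx ?(lt_geF pz) ?(le_trans (ltW pz) zq).
Qed.

Lemma card_itv_ltr p z q : (p <= z)%O -> (z < q)%O -> (#|itv p z| < #|itv p q|)%N.
Proof.
move=> pz zq; apply: proper_card; apply/properP; split.
  by apply/subsetP=> s; rewrite !inE => /andP[-> sz]; rewrite (le_trans sz (ltW zq)).
by exists q; rewrite !inE ?lexx ?(lt_geF zq) ?andbF ?(le_trans pz (ltW zq)).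
Qed.

Lemma card_itv_gt1 p q : (p < q)%O -> (1 < #|itv p q|)%N.
Proof.
move=> pq; apply: leq_trans (card_itv_ltl pq (lexx q)).
by apply/card_gt0P; exists q; rewrite !inE lexx.
Qed.

Lemma mobius_fuel_stable n m p q :
  (#|itv p q| <= n.+1)%N -> (#|itv p q| <= m.+1)%N ->
  mobius_fuel n p q = mobius_fuel m p q.
Proof.
elim: n m p q => [|n IH] [|m] p q hn hm //=; case: eqP => // /eqP neq_pq;
  case: ifP => // le_pq; have lt_pq : (p < q)%O by rewrite lt_neqAle neq_pq.
1,2: by have := card_itv_gt1 lt_pq; lia.
congr (- _); apply: eq_bigr => s /andP[ps sq].
by have := card_itv_ltr ps sq => lt_card; apply: IH; lia.
Qed.

Lemma mobius_rec p q : (p < q)%O ->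
  mobius p q = - \sum_(s | (p <= s)%O && (s < q)%O) mobius p s.
Proof.
move=> lt_pq; rewrite /mobius.
have : (#|itv p q| <= #|T|)%N := max_card _.
case: #|T| => [|n] hcard; first by have := card_itv_gt1 lt_pq; lia.
rewrite [LHS]/= (lt_eqF lt_pq) (ltW lt_pq); congr (- _).
apply: eq_bigr => s /andP[ps sq].
by apply: mobius_fuel_stable; have := card_itv_ltr ps sq; lia.
Qed.

Section Rank.
Variable rk : T -> int.
Hypothesis rkR : is_rank rk.

Lemma rank_lt p q : (p < q)%O -> rk p < rk q.
Proof.
move: {2}#|itv p q| (leqnn #|itv p q|) => n; elim: n p q => [|n IH] p q hn lt_pq.
  by have := card_itv_gt1 lt_pq; lia.
have [cov | ] := boolP (covers p q); first by rewrite (rkR.1 _ _ cov) ltrDl.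
rewrite /covers lt_pq negb_forall => /existsP[z /negPn /andP[pz zq]].
have := card_itv_ltl pz (ltW zq); have := card_itv_ltr (ltW pz) zq => ltl ltr.
by apply: lt_trans (IH p z _ pz) (IH z q _ zq); lia.
Qed.

Lemma rank_le p q : (p <= q)%O -> rk p <= rk q.
Proof. by rewrite le_eqVlt => /predU1P[-> // | /rank_lt/ltW]. Qed.

Lemma le_rank_eq p q : (p <= q)%O -> rk p = rk q -> p = q.
Proof.
by rewrite le_eqVlt => /predU1P[// | /rank_lt]; move=> + eq_rk; rewrite eq_rk ltxx.
Qed.

Lemma rank_bottom b : (forall x, (b <= x)%O) -> rk b = -1.
Proof.
move=> hb; apply: rkR.2; apply/forallP => z; apply/negP => zb.
by have := hb z; rewrite (lt_geF zb).
Qed.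

End Rank.
End Intervals.

Section Eulerian.
Context {disp : Order.disp_t} {T : finPOrderType disp}.
Implicit Types p q s : T.
Variables (rk : T -> int) (d : nat).
Hypothesis rkE : eulerian rk d%:Z.

Let rkR : is_rank rk := rkE.1.

Lemma rank_geN1 x : -1 <= rk x.
Proof.
case: rkE => _ [[b hb] _]; rewrite -(rank_bottom rkR hb).
exact/(rank_le rkR)/hb.
Qed.

Lemma rank_le_top x : rk x <= d%:Z.
Proof. by case: rkE => _ [_ [[t [ht <-]] _]]; exact/(rank_le rkR)/ht. Qed.

Definition height x : nat := `|(rk x + 1)%R|%N.

Lemma heightE x : (height x)%:Z = rk x + 1.
Proof. by have := rank_geN1 x; rewrite /height; lia. Qed.

Lemma height_lt x : (height x < d.+2)%N.
Proof. by have := rank_geN1 x; have := rank_le_top x; rewrite /height; lia. Qed.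

Lemma rank_eq_height x (a : nat) : (rk x == a%:Z - 1) = (height x == a).
Proof. by have := heightE x => hx; apply/eqP/eqP; lia. Qed.

Lemma height_le p q : (p <= q)%O -> (height p <= height q)%N.
Proof. by move/(rank_le rkR); have := heightE p; have := heightE q; lia. Qed.

Lemma absz_rank_sub p q : (p <= q)%O -> `|(rk q - rk p)%R|%N = (height q - height p)%N.
Proof. by move/(rank_le rkR); have := heightE p; have := heightE q; lia. Qed.

Lemma mobius_height p q : (p <= q)%O -> mobius p q = (-1) ^+ (height q - height p).
Proof. by move=> le_pq; rewrite rkE.2.2.2 // absz_rank_sub. Qed.

(* On an Eulerian poset the defining recursion of [mu(p, -)] is Euler's relation. *)
Lemma euler_interval p q : (p < q)%O ->
  \sum_(s | (p <= s <= q)%O) ((-1) ^+ height s : int) = 0.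
Proof.
move=> lt_pq.
transitivity ((-1) ^+ height p * \sum_(s | (p <= s <= q)%O) mobius p s).
  rewrite mulr_sumr; apply: eq_bigr => s /andP[ps _].
  by rewrite mobius_height // -exprD subnKC ?height_le.
rewrite (bigD1 q) /= ?lexx ?(ltW lt_pq) // (mobius_rec lt_pq).
rewrite (eq_bigl (fun s => (p <= s)%O && (s < q)%O)) ?addNr ?mulr0 // => s.
by rewrite lt_neqAle -andbA (andbC (s <= q)%O).
Qed.

Lemma Nij_eq0 i j : j < i -> Nij rk i j = 0%N.
Proof.
move=> lt_ji; apply/eqP; rewrite cards_eq0; apply/eqP/setP => -[p q]; rewrite !inE /=.
apply/negP => /and3P[/(rank_le rkR) + /eqP rkp /eqP rkq].
by rewrite rkp rkq leNgt lt_ji.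
Qed.

Lemma Nij_diag r : Nij rk r r = fvec rk r.
Proof.
rewrite /Nij /fvec -(card_imset _ (f := fun p : T => (p, p))); last by move=> ? ? [].
apply: eq_card => -[p q]; rewrite !inE /=; apply/idP/imsetP.
  case/and3P => le_pq /eqP rkp /eqP rkq; exists p; first by rewrite inE rkp.
  by rewrite (le_rank_eq rkR le_pq) // rkp rkq.
by case=> x; rewrite inE => /eqP rkx [-> ->]; rewrite lexx rkx eqxx.
Qed.

Lemma Nij_bottom r : Nij rk (-1) r = fvec rk r.
Proof.
case: rkE => _ [[b hb] _]; have rkb := rank_bottom rkR hb.
rewrite /Nij /fvec -(card_imset _ (f := fun q : T => (b, q))); last by move=> ? ? [].
apply: eq_card => -[p q]; rewrite !inE /=; apply/idP/imsetP.
  case/and3P => _ /eqP rkp /eqP rkq; exists q; first by rewrite inE rkq.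
  by rewrite -(le_rank_eq rkR (hb p)) // rkp.
by case=> x; rewrite inE => /eqP rkx [-> ->]; rewrite hb rkb rkx !eqxx.
Qed.

Lemma Nij_top r : Nij rk r d%:Z = fvec rk r.
Proof.
case: rkE => _ [_ [[t [ht rkt]] _]].
rewrite /Nij /fvec -(card_imset _ (f := fun p : T => (p, t))); last by move=> ? ? [].
apply: eq_card => -[p q]; rewrite !inE /=; apply/idP/imsetP.
  case/and3P => _ /eqP rkp /eqP rkq; exists p; first by rewrite inE rkp.
  by rewrite (le_rank_eq rkR (ht q)) // rkq.
by case=> x; rewrite inE => /eqP rkx [-> ->]; rewrite ht rkt rkx !eqxx.
Qed.

Definition height_ord x : 'I_d.+2 := Ordinal (height_lt x).

(* Double counting: [N_{a-1,b-1}] counts the pairs [p <= q] of heights [a] and [b]. *)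
Lemma sum_Nij_height (R : pzSemiRingType) (F : nat -> nat -> R) :
  \sum_(0 <= a < d.+2) \sum_(0 <= b < d.+2) F a b * (Nij rk (a%:Z - 1) (b%:Z - 1))%:R =
  \sum_p \sum_(q | (p <= q)%O) F (height p) (height q).
Proof.
rewrite pair_big_dep (partition_big (fun pq => (height_ord pq.1, height_ord pq.2)) xpredT) //=.
rewrite (big_mkord xpredT); under [LHS]eq_bigr do rewrite (big_mkord xpredT).
rewrite pair_big; apply: eq_bigr => -[a b] _ /=.
rewrite (eq_bigr (fun=> F a b)) => [|[p q] /andP[_ /eqP[<- <-]] //].
rewrite sumr_const mulr_natr; congr (_ *+ _); apply: eq_card => -[p q]; rewrite !inE /=.
by rewrite !rank_eq_height unfold_in /= xpair_eqE -!val_eqE.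
Qed.

Lemma alt_sum_Nij_column_height (b : nat) : (0 < b < d.+2)%N ->
  \sum_(0 <= a < d.+2) (-1) ^+ a * (Nij rk (a%:Z - 1) (b%:Z - 1))%:Z = 0.
Proof.
move=> /andP[b_gt0 b_lt]; case: rkE => _ [[bot hbot] _].
have euler_below : \sum_p \sum_(q | (p <= q)%O)
    (if height q == b then (-1) ^+ height p else 0 : int) = 0.
  rewrite (exchange_big_dep xpredT) //= big1 // => q _.
  case: eqP => [hq | _]; last by rewrite big1.
  have lt_bq : (bot < q)%O.
    rewrite lt_def hbot andbT; apply: contraTneq b_gt0 => qbot.
    by rewrite -hq qbot /height (rank_bottom rkR hbot).
  by rewrite -[RHS](euler_interval lt_bq); apply: eq_bigl => p; rewrite hbot.
rewrite -[RHS]euler_below.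
rewrite -[RHS](sum_Nij_height (fun a b' => if b' == b then (-1) ^+ a else 0)) /=.
apply: eq_bigr => a _.
rewrite (bigD1_seq b) ?mem_index_iota ?iota_uniq //= eqxx natz big1_seq ?addr0 //.
by move=> b' /andP[/negbTE-> _]; rewrite mul0r.
Qed.

Lemma alt_sum_Nij_row_height (a : nat) : (a <= d)%N ->
  \sum_(0 <= b < d.+2) (-1) ^+ b * (Nij rk (a%:Z - 1) (b%:Z - 1))%:Z = 0.
Proof.
move=> le_ad; case: rkE => _ [_ [[top [htop rktop]] _]].
have euler_above : \sum_p \sum_(q | (p <= q)%O)
    (if height p == a then (-1) ^+ height q else 0 : int) = 0.
  apply: big1 => p _; case: eqP => [hp | _]; last by rewrite big1.
  have lt_ptop : (p < top)%O.
    rewrite lt_def htop andbT; apply: contraTneq le_ad => ptop.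
    by rewrite -hp -ptop /height rktop; lia.
  by rewrite -[RHS](euler_interval lt_ptop); apply: eq_bigl => q; rewrite htop andbT.
rewrite -[RHS]euler_above.
rewrite -[RHS](sum_Nij_height (fun a' b => if a' == a then (-1) ^+ b else 0)) /=.
rewrite [RHS](bigD1_seq a) ?mem_index_iota ?iota_uniq ?ltnS ?(leqW le_ad) //=.
rewrite [X in _ = _ + X]big1_seq ?addr0 => [|a' /andP[/negbTE-> _]]; last first.
  by rewrite big1 // => b _; rewrite mul0r.
by apply: eq_bigr => b _; rewrite eqxx natz.
Qed.

Lemma mobius_polyE : mobius_poly rk =
  \sum_(0 <= a < d.+2) \sum_(a <= b < d.+2)
     ((Nij rk (a%:Z - 1) (b%:Z - 1))%:Z)%:P * (- 'X) ^+ (b - a)%N.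
Proof.
transitivity (\sum_p \sum_(q | (p <= q)%O) (- 'X : {poly int}) ^+ (height q - height p)).
  apply: eq_bigr => p _; apply: eq_bigr => q le_pq.
  by rewrite mobius_height // absz_rank_sub // [RHS]exprNn rmorphXn rmorphN1.
rewrite -(sum_Nij_height (fun a b => (- 'X) ^+ (b - a))); apply: eq_big_nat => a /andP[_ lt_a].
rewrite (big_cat_nat (n := a)) //= 1?ltnW // [X in X + _]big_nat_cond big1 ?add0r.
  by apply: eq_bigr => b _; rewrite [RHS]mulrC -polyC_natr natz.
move=> b /andP[/andP[_ lt_ba] _]; rewrite (Nij_eq0 (i := a%:Z - 1)) ?mulr0 //; lia.
Qed.

End Eulerian.

Lemma PoszS_subr1 n : (n.+1)%:Z - 1 = n%:Z.
Proof. lia. Qed.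

Lemma signr_subn (R : pzRingType) m n : (n <= m)%N ->
  (-1) ^+ (m - n) = (-1) ^+ m * (-1) ^+ n :> R.
Proof. by move=> le_nm; rewrite -signr_odd oddB // signr_addb !signr_odd. Qed.

Section AlternatingSums.
Context {disp : Order.disp_t} {T : finPOrderType disp}.
Variables (rk : T -> int) (d : nat).
Hypothesis rkE : eulerian rk d%:Z.

Let N i j : int := (Nij rk i j)%:Z.
Let f r : int := (fvec rk r)%:Z.

Lemma alt_sum_Nij_column (j : nat) : (j <= d)%N ->
  \sum_(0 <= k < j.+1) (-1) ^+ k * N k j = f j.
Proof.
move=> le_jd; have := alt_sum_Nij_column_height rkE (b := j.+1) le_jd.
have tail : \sum_(j.+1 <= k < d.+1) (-1) ^+ k * N k j = 0.
  rewrite big_nat_cond big1 // => k /andP[/andP[lt_jk _] _].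
  by rewrite /N (Nij_eq0 rkE) ?mulr0 //; lia.
rewrite big_nat_recl // sub0r PoszS_subr1 expr0 mul1r (Nij_bottom rkE).
under eq_bigr do rewrite PoszS_subr1 exprS mulN1r mulNr.
by rewrite sumrN (big_cat_nat (n := j.+1)) //= tail addr0 => /eqP; rewrite subr_eq0 => /eqP.
Qed.

Lemma alt_sum_Nij_row (i : nat) : (i < d)%N ->
  \sum_(i <= j < d.+1) (-1) ^+ j * N i j = 0.
Proof.
move=> lt_id; have := alt_sum_Nij_row_height rkE (a := i.+1) lt_id.
have head : \sum_(0 <= j < i) (-1) ^+ j * N i j = 0.
  rewrite big_nat_cond big1 // => j /andP[/andP[_ lt_ji] _].
  by rewrite /N (Nij_eq0 rkE) ?mulr0 //; lia.
rewrite big_nat_recl // PoszS_subr1 sub0r (Nij_eq0 rkE) ?mulr0 ?add0r; last lia.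
under eq_bigr do rewrite PoszS_subr1 exprS mulN1r mulNr.
rewrite sumrN (big_cat_nat (n := i)) //=; last lia.
by rewrite head add0r => /eqP; rewrite oppr_eq0 => /eqP.
Qed.

Lemma Nij_superdiag (i : nat) : (i < d)%N ->
  N i i.+1 = ((-1) ^+ i + 1) * f i.+1
             + \sum_(0 <= k < i) (-1) ^+ (i.+1 - k) * N k i.+1.
Proof.
move=> lt_id; have := alt_sum_Nij_column lt_id.
rewrite !big_nat_recr //= {3}/N (Nij_diag rkE) -/(f _) => col.
under [in RHS]eq_big_nat => k /andP[_ lt_ki] do
  rewrite (signr_subn _ (leqW (ltnW lt_ki))) -mulrA.
rewrite -mulr_sumr; move: col; rewrite !exprS; set S := \sum_(0 <= k < i) _.
by rewrite -signr_odd; case: (odd i) => /=; rewrite ?expr0 ?expr1 => h; lia.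
Qed.

Lemma Nij_cotop (i : nat) : (i.+1 < d)%N ->
  N i (d - 1)%N = ((-1) ^+ (d - i) + 1) * f i
                  + \sum_(i.+1 <= j < d - 1) (-1) ^+ (d - j) * N i j.
Proof.
move=> lt_id; have row := alt_sum_Nij_row (ltnW lt_id).
have d_eq : d = (d - 1).+1 by lia.
rewrite [in X in X = 0]d_eq big_ltn ?big_nat_recr //= -?d_eq in row; try lia.
rewrite {1}/N (Nij_diag rkE) {3}/N (Nij_top rkE) -!/(f _) in row.
under [in RHS]eq_big_nat => j /andP[_ lt_jd] do
  rewrite (signr_subn _ (ltnW (leq_trans lt_jd (leq_subr 1 d)))) -mulrA.
rewrite -mulr_sumr signr_subn; last lia.
move: row; rewrite (signr_subn _ (_ : 1 <= d)%N); last lia.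
set S := \sum_(i.+1 <= j < d - 1) _.
rewrite expr1 -[(-1) ^+ d]signr_odd -[(-1) ^+ i]signr_odd.
by case: (odd d); case: (odd i) => /=; rewrite ?expr0 ?expr1 => h; lia.
Qed.

End AlternatingSums.

Section Determination.
Context {disp disp' : Order.disp_t} {T : finPOrderType disp} {T' : finPOrderType disp'}.
Variables (rk : T -> int) (rk' : T' -> int) (d : nat).
Hypotheses (rkE : eulerian rk d%:Z) (rkE' : eulerian rk' d%:Z).
Hypothesis same_fvec : forall r, fvec rk' r = fvec rk r.
Hypothesis same_inner : forall i j : int, 0 < i + 1 < j -> j < d%:Z - 1 ->
  Nij rk' i j = Nij rk i j.

Lemma Nij_superdiag_same (i : nat) : (i < d)%N ->
  (Nij rk' i i.+1)%:Z = (Nij rk i i.+1)%:Z.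
Proof.
move=> lt_id; have [-> | ne_d] := eqVneq i.+1 d.
  by rewrite (Nij_top rkE) (Nij_top rkE') same_fvec.
have [d_eq | ne_d2] := eqVneq i.+2 d.
  have -> : i.+1 = (d - 1)%N by lia.
  rewrite (Nij_cotop rkE') ?(Nij_cotop rkE) ?same_fvec; try lia.
  by congr (_ + _); apply: eq_big_nat => j; lia.
rewrite (Nij_superdiag rkE') // (Nij_superdiag rkE) // same_fvec; congr (_ + _).
by apply: eq_big_nat => k /andP[_ lt_ki]; rewrite same_inner //; lia.
Qed.

Lemma Nij_same (i j : nat) : (i <= j <= d)%N -> (Nij rk' i j)%:Z = (Nij rk i j)%:Z.
Proof.
case/andP => le_ij le_jd.
have [<- | ne_ij] := eqVneq i j; first by rewrite (Nij_diag rkE) (Nij_diag rkE') same_fvec.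
have [-> | ne_jd] := eqVneq j d; first by rewrite (Nij_top rkE) (Nij_top rkE') same_fvec.
have [-> | ne_j] := eqVneq j i.+1; first by apply: Nij_superdiag_same; lia.
have [-> | ne_jd1] := eqVneq j (d - 1)%N; last by rewrite same_inner //; lia.
rewrite (Nij_cotop rkE') ?(Nij_cotop rkE) ?same_fvec; try lia.
congr (_ + _); apply: eq_big_nat => k /andP[lt_ik lt_kd]; congr (_ * _).
have [-> | ne_k] := eqVneq k i.+1; first by apply: Nij_superdiag_same; lia.
by rewrite same_inner //; lia.
Qed.

Lemma mobius_poly_same : mobius_poly rk' = mobius_poly rk.
Proof.
rewrite (mobius_polyE rkE) (mobius_polyE rkE').
apply: eq_big_nat => a /andP[_ lt_a]; apply: eq_big_nat => b /andP[le_ab lt_b].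
congr (_%:P * _); case: a le_ab lt_a => [|a] le_ab lt_a.
  by rewrite sub0r (Nij_bottom rkE) (Nij_bottom rkE') same_fvec.
case: b le_ab lt_b => [|b] // le_ab lt_b.
by rewrite !PoszS_subr1 Nij_same //; lia.
Qed.

End Determination.

Theorem mainTheorem18 (disp : Order.disp_t) (T : finPOrderType disp)
    (rk : T -> int) (d : nat) (hd : (3 <= d)%N) (hE : eulerian rk d%:Z) :
  let f := fun r : int => ((fvec rk r)%:Z : int) in
  let N := fun i j : int => ((Nij rk i j)%:Z : int) in
  (mobius_poly rk =
        \sum_(0 <= a < d.+2) \sum_(a <= b < d.+2)
          (N (a%:Z - 1) (b%:Z - 1))%:P * (- 'X) ^+ (b - a)%N) /\
      (forall r : int, -1 <= r <= d%:Z ->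
         N r r = f r /\ N (-1) r = f r /\ N r d%:Z = f r) /\
      N 0 1 = 2 * f 1 /\
      (forall i : nat, (1 <= i <= d - 3)%N ->
         N i%:Z (i.+1)%:Z =
           ((-1) ^+ i + 1) * f (i.+1)%:Z
           + \sum_(0 <= k < i) (-1) ^+ (i.+1 - k)%N * N k%:Z (i.+1)%:Z) /\
      N (d - 2)%N%:Z (d - 1)%N%:Z = 2 * f (d - 2)%N%:Z /\
    (forall i : nat, (i <= d - 3)%N ->
         N i%:Z (d - 1)%N%:Z =
           ((-1) ^+ (d - i)%N + 1) * f i%:Z
           + \sum_(i.+1 <= j < d - 1) (-1) ^+ (d - j)%N * N i%:Z j%:Z) /\
    (forall (disp' : Order.disp_t) (T' : finPOrderType disp') (rk' : T' -> int),
       eulerian rk' d%:Z ->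
       (forall r : int, fvec rk' r = fvec rk r) ->
       (forall i j : int, 0 < i + 1 < j -> j < d%:Z - 1 -> Nij rk' i j = Nij rk i j) ->
       mobius_poly rk' = mobius_poly rk).
Proof.
move=> f N; split; first exact: mobius_polyE.
split; first by move=> r _; rewrite /N /f (Nij_diag hE) (Nij_bottom hE) (Nij_top hE).
split.
  have := Nij_superdiag hE (i := 0) (ltnW (ltnW hd)).
  by rewrite big_geq // addr0 expr0.
split; first by move=> i /andP[_ le_id]; apply: (Nij_superdiag hE); lia.
split.
  have lt_d : ((d - 2).+1 < d)%N by lia.
  have := Nij_cotop hE lt_d; rewrite big_geq; last lia.
  have -> : (d - (d - 2))%N = 2 by lia.
  by rewrite expr2 mulrNN mulr1 addr0 /N /f.
split; first by move=> i le_id; apply: (Nij_cotop hE); lia.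
by move=> disp' T' rk' hE' same_fvec same_inner; apply: mobius_poly_same hE hE' _ _.
Qed.
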